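(* Let $0<d<1/2$ and $\mu\in\mathbb{R}$. Let $\{x_t\}$ satisfy Assumption 1 (see context) and, for $t=1,\dots,T$, let $$y_t=\mu+\sum_{j=0}^{t-1}\pi_j(-d)\,x_{t-j}$$ (a type II fractionally integrated process). Equivalently, applying the truncated fractional difference filter gives, for $t=1,\dots,T$, $$\Delta_+^d y_t:=\sum_{j=0}^{t-1}\pi_j(d)\,y_{t-j}=r_t\,\mu+x_t,\qquad r_t=\sum_{j=0}^{t-1}\pi_j(d).$$ Let $\widehat\mu$ be the ordinary least squares estimator of $\mu$ in the regression of $\Delta_+^d y_t$ on $r_t$, i.e. $$\widehat\mu=\frac{\sum_{t=1}^T r_t\,\Delta_+^d y_t}{\sum_{t=1}^T r_t^2}.$$ Then, as $T\to\infty$, $$T^{1-2d}\,\operatorname{Var}(\widehat\mu)\;\longrightarrow\;\frac{\omega_x^2\,(1-2d)\,(\pi d)^2}{\Gamma^2(d+1)\,\sin^2(\pi d)},$$ where $\Gamma$ is the gamma function and $\omega_x^2$ is the long-run variance of $\{x_t\}$.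
   Context: For real $\delta$, the coefficients $\pi_j(\delta)$, $j\ge 0$, are defined by the binomial expansion $(1-z)^{\delta}=\sum_{j=0}^\infty \pi_j(\delta)z^j$, i.e. $\pi_0(\delta)=1$ and $\pi_j(\delta)=\prod_{k=1}^{j}\frac{k-1-\delta}{k}$. Assumption 1: $\{x_t\}$ is a covariance-stationary process $x_t=\sum_{j=0}^\infty c_j\varepsilon_{t-j}$ with $c_0=1$, $\sum_{j=0}^\infty|c_j|<\infty$, $c(1):=\sum_{j=0}^\infty c_j\neq 0$, where $\{\varepsilon_t\}$ is white noise with $E(\varepsilon_t)=0$, $E(\varepsilon_t^2)=\sigma^2>0$ and $E(\varepsilon_t\varepsilon_{t+h})=0$ for $h\ne0$. Its autocovariances are $\gamma_x(h)=E(x_tx_{t+h})$ and its long-run variance is $\omega_x^2=\sigma^2\big(\sum_{j=0}^\infty c_j\big)^2=\sum_{h=-\infty}^\infty\gamma_x(h)\in(0,\infty)$. *)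

From Stdlib Require Import Reals Lra Lia Arith Factorial.
Open Scope R_scope.

Fixpoint rsum (f : nat -> R) (n : nat) : R :=
  match n with
  | O => 0
  | S k => rsum f k + f k
  end.

(* Binomial coefficients of (1-z)^delta:
   pi_0 = 1, pi_j = prod_{k=1}^j (k-1-delta)/k *)
Fixpoint frac_pi (delta : R) (j : nat) : R :=
  match j with
  | O => 1
  | S k => frac_pi delta k * ((INR k - delta) / INR (S k))
  end.

(* Gauss' product definition of the Gamma function (x > 0):
   Gamma(x) = lim_n n! n^x / (x (x+1) ... (x+n)). *)
Fixpoint rising_prod (x : R) (n : nat) : R :=
  match n with
  | O => x
  | S k => rising_prod x k * (x + INR (S k))
  end.

Definition is_Gamma (x G : R) : Prop :=
  Un_cv (fun n => INR (fact n) * Rpower (INR n) x / rising_prod x n) G.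

(* ---- Second-order model of the random variables ----
   Every random variable that appears is an affine function of
   x_1, ..., x_T: a pair (constant, coefficients a_s of x_s, s = 1..T). *)
Definition affRV := (R * (nat -> R))%type.

Definition rv_add (X Y : affRV) : affRV :=
  (fst X + fst Y, fun s => snd X s + snd Y s).
Definition rv_scale (a : R) (X : affRV) : affRV :=
  (a * fst X, fun s => a * snd X s).
Definition rv_zero : affRV := (0, fun _ => 0).
Fixpoint rv_sum (F : nat -> affRV) (n : nat) : affRV :=
  match n with
  | O => rv_zero
  | S k => rv_add (rv_sum F k) (F k)
  end.

Definition x_rv (t : nat) : affRV :=
  (0, fun s => if Nat.eqb s t then 1 else 0).

(* Autocovariance of x_t = sum_j c_j eps_{t-j}, eps white noise with
   variance sigma2:  gamma(h) = sigma2 * sum_j c_j c_{j+h}, for h >= 0. *)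
Definition is_autocov (c : nat -> R) (sigma2 : R) (gam : nat -> R) : Prop :=
  forall h : nat, infinite_sum (fun j => sigma2 * (c j * c (j + h)%nat)) (gam h).

Definition absdiff (s u : nat) : nat := if Nat.leb s u then (u - s)%nat else (s - u)%nat.

Definition rv_var (gam : nat -> R) (T : nat) (X : affRV) : R :=
  rsum (fun s' => rsum (fun u' =>
     snd X (S s') * snd X (S u') * gam (absdiff (S s') (S u'))) T) T.

Definition y_rv (d mu : R) (t : nat) : affRV :=
  rv_add (mu, fun _ => 0)
         (rv_sum (fun j => rv_scale (frac_pi (-d) j) (x_rv (t - j)%nat)) t).

Definition dy_rv (d mu : R) (t : nat) : affRV :=
  rv_sum (fun j => rv_scale (frac_pi d j) (y_rv d mu (t - j)%nat)) t.

Definition r_t (d : R) (t : nat) : R := rsum (frac_pi d) t.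

Definition muhat (d mu : R) (T : nat) : affRV :=
  rv_scale (/ rsum (fun t' => r_t d (S t') ^ 2) T)
           (rv_sum (fun t' => rv_scale (r_t d (S t')) (dy_rv d mu (S t'))) T).

(* Since the truncated filter inverts the truncated integration exactly
   ([Delta_+^d y_t = r_t mu + x_t]), the estimator is [mu + sum r_t x_t / sum r_t^2], so its
   variance is the quadratic form [sum_{s,u} r_s r_u gamma(|s-u|)] divided by [(sum r_t^2)^2].
   The weights [r_{n+1} = pi_n(d-1) = prod_{k<=n} (1 - d/k)] decrease to 0, and writing
   [1 - d/k = (1 - d^2/k^2) * k/(k+d)] splits them into Euler's product for [sin (pi d)/(pi d)]
   (obtained from Wallis integrals) and Gauss's product for [Gamma (d+1)], whence
   [n^d r_{n+1} -> sin (pi d) Gamma (d+1) / (pi d)] and, by Stolz-Cesaro,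
   [sum_{t<=T} r_t^2 ~ T^(1-2d) (sin (pi d) Gamma (d+1) / (pi d))^2 / (1-2d)].
   As this diverges and the weights are monotone, the quadratic form divided by [sum r_t^2]
   tends to [sum_h gamma(h) = omega^2] by dominated convergence. *)

From Stdlib Require Import Reals Lra Lia Factorial.
From Coquelicot Require Import Coquelicot.
Open Scope R_scope.

Lemma rsum_ext f g n : (forall k, (k < n)%nat -> f k = g k) -> rsum f n = rsum g n.
Proof.
  induction n as [|n IH]; intros H; simpl; auto.
  rewrite IH by (intros; apply H; lia). now rewrite H by lia.
Qed.

Lemma rsum_plus f g n : rsum (fun k => f k + g k) n = rsum f n + rsum g n.
Proof. induction n as [|n IH]; simpl; [ring | rewrite IH; ring]. Qed.

Lemma rsum_minus f g n : rsum (fun k => f k - g k) n = rsum f n - rsum g n.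
Proof. induction n as [|n IH]; simpl; [ring | rewrite IH; ring]. Qed.

Lemma rsum_scal c f n : rsum (fun k => c * f k) n = c * rsum f n.
Proof. induction n as [|n IH]; simpl; [ring | rewrite IH; ring]. Qed.

Lemma rsum_const c n : rsum (fun _ => c) n = INR n * c.
Proof. induction n as [|n IH]; simpl rsum; [simpl; ring | rewrite IH, S_INR; ring]. Qed.

Lemma rsum_zero n : rsum (fun _ => 0) n = 0.
Proof. rewrite rsum_const; ring. Qed.

Lemma rsum_recl f n : rsum f (S n) = f 0%nat + rsum (fun k => f (S k)) n.
Proof. induction n as [|n IH]; [simpl; ring | cbn [rsum] in *; rewrite IH; ring]. Qed.

Lemma rsum_split f n m : rsum f (n + m) = rsum f n + rsum (fun k => f (n + k)%nat) m.
Proof.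
  induction m as [|m IH]; [rewrite Nat.add_0_r; simpl; ring|].
  rewrite Nat.add_succ_r; simpl. rewrite IH; ring.
Qed.

Lemma rsum_rev f n : rsum f n = rsum (fun k => f (n - 1 - k)%nat) n.
Proof.
  induction n as [|n IH]; [reflexivity|].
  rewrite (rsum_recl (fun k => f (S n - 1 - k)%nat)). cbn [rsum]. rewrite IH.
  replace (S n - 1 - 0)%nat with n by lia.
  rewrite Rplus_comm. f_equal. apply rsum_ext. intros k Hk. f_equal. lia.
Qed.

Lemma rsum_swap (f : nat -> nat -> R) n m :
  rsum (fun i => rsum (fun j => f i j) m) n = rsum (fun j => rsum (fun i => f i j) n) m.
Proof.
  induction n as [|n IH]; simpl; [now rewrite rsum_zero|].
  rewrite IH, <- rsum_plus. reflexivity.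
Qed.

Lemma Rabs_rsum_le f n : Rabs (rsum f n) <= rsum (fun k => Rabs (f k)) n.
Proof.
  induction n as [|n IH]; simpl; [rewrite Rabs_R0; lra|].
  eapply Rle_trans; [apply Rabs_triang | lra].
Qed.

Lemma rsum_le f g n : (forall k, (k < n)%nat -> f k <= g k) -> rsum f n <= rsum g n.
Proof.
  induction n as [|n IH]; intros H; simpl; [lra|].
  pose proof (IH ltac:(intros; apply H; lia)). pose proof (H n ltac:(lia)). lra.
Qed.

Lemma rsum_nonneg f n : (forall k, (k < n)%nat -> 0 <= f k) -> 0 <= rsum f n.
Proof. intros H. rewrite <- (rsum_zero n). now apply rsum_le. Qed.

Lemma rsum_sq_pos a n : (forall k, 0 < a k) -> 0 < rsum (fun s => a s ^ 2) (S n).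
Proof.
  intros Ha. cbn [rsum].
  pose proof (rsum_nonneg (fun s => a s ^ 2) n (fun k _ => pow2_ge_0 (a k))).
  pose proof (pow_lt _ 2 (Ha n)). lra.
Qed.

Lemma rsum_incr f n m : (forall k, 0 <= f k) -> (n <= m)%nat -> rsum f n <= rsum f m.
Proof. intros H Hnm. induction Hnm as [|m _ IH]; simpl; [lra|]. pose proof (H m). lra. Qed.

Lemma rsum_trunc f k0 n :
  (k0 <= n)%nat -> (forall k, (k0 <= k < n)%nat -> f k = 0) -> rsum f n = rsum f k0.
Proof.
  intros Hk H. induction Hk as [|n Hk IH]; auto. simpl.
  rewrite IH by (intros; apply H; lia). rewrite H by lia. ring.
Qed.

Lemma rsum_sub_shift a m K :
  rsum (fun s => a s - a (s + m)%nat) K = rsum a m - rsum (fun i => a (K + i)%nat) m.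
Proof.
  rewrite rsum_minus.
  pose proof (rsum_split a K m) as H1. pose proof (rsum_split a m K) as H2.
  rewrite Nat.add_comm, H1 in H2.
  rewrite (rsum_ext (fun s => a (s + m)%nat) (fun k => a (m + k)%nat)) by (intros; f_equal; lia).
  lra.
Qed.

Lemma rsum_sum_f_R0 f n : rsum f (S n) = sum_f_R0 f n.
Proof. induction n as [|n IH]; [simpl; ring | cbn [rsum] in *; rewrite IH; reflexivity]. Qed.

Lemma rsum_indicator f s n : (1 <= s)%nat ->
  rsum (fun k => f k * (if Nat.eqb s (S k) then 1 else 0)) n =
  if Nat.leb s n then f (s - 1)%nat else 0.
Proof.
  intros Hs. induction n as [|n IH]; [simpl; destruct s; [lia | reflexivity]|].
  simpl rsum. rewrite IH.
  destruct (Nat.leb_spec s n), (Nat.eqb_spec s (S n)), (Nat.leb_spec s (S n));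
    try lia; try ring.
  subst s. replace (S n - 1)%nat with n by lia. ring.
Qed.

Lemma is_lim_seq_inv_S : is_lim_seq (fun n => / (INR n + 1)) 0.
Proof.
  apply (is_lim_seq_inv _ p_infty); [|discriminate].
  apply (is_lim_seq_plus _ _ p_infty 1 p_infty);
    [apply is_lim_seq_INR | apply is_lim_seq_const | reflexivity].
Qed.

Lemma is_lim_seq_abs_le_0 (u b : nat -> R) :
  (forall n, Rabs (u n) <= b n) -> is_lim_seq b 0 -> is_lim_seq u 0.
Proof.
  intros H Hb. apply (is_lim_seq_le_le (fun n => - b n) u b); auto.
  - intros n. specialize (H n). apply Rabs_le_between in H. lra.
  - replace (Finite 0) with (Finite (- 0)) by (f_equal; ring). now apply (is_lim_seq_opp b 0).
Qed.

Lemma is_lim_seq_rate (u : nat -> R) (l C : R) :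
  (forall n, Rabs (u n - l) <= C / (INR n + 1)) -> is_lim_seq u l.
Proof.
  intros H.
  assert (H0 : is_lim_seq (fun n => u n - l) 0).
  { apply (is_lim_seq_abs_le_0 _ (fun n => C * / (INR n + 1))); [exact H|].
    replace (Finite 0) with (Finite (C * 0)) by (f_equal; ring).
    apply (is_lim_seq_scal_l _ C 0), is_lim_seq_inv_S. }
  apply (is_lim_seq_ext (fun n => l + (u n - l))); [intros; ring|].
  replace (Finite l) with (Finite (l + 0)) by (f_equal; ring).
  apply is_lim_seq_plus'; [apply is_lim_seq_const | exact H0].
Qed.

Lemma is_lim_seq_ub u (l : R) N B :
  is_lim_seq u l -> (forall M, (N <= M)%nat -> u M <= B) -> l <= B.
Proof.
  intros H HB. apply (is_lim_seq_incr_n _ N) in H.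
  exact (is_lim_seq_le _ _ _ _ (fun M => HB (M + N)%nat ltac:(lia)) H (is_lim_seq_const B)).
Qed.

Lemma is_lim_seq_lb u (l : R) N B :
  is_lim_seq u l -> (forall M, (N <= M)%nat -> B <= u M) -> B <= l.
Proof.
  intros H HB. apply (is_lim_seq_incr_n _ N) in H.
  exact (is_lim_seq_le _ _ _ _ (fun M => HB (M + N)%nat ltac:(lia)) (is_lim_seq_const B) H).
Qed.

Lemma is_lim_seq_abs_ub u (l : R) N B :
  is_lim_seq u l -> (forall M, (N <= M)%nat -> Rabs (u M) <= B) -> Rabs l <= B.
Proof. intros H HB. apply is_lim_seq_abs in H. exact (is_lim_seq_ub _ _ N B H HB). Qed.

Lemma is_lim_seq_rsum (F : nat -> nat -> R) (L : nat -> R) N :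
  (forall h, (h < N)%nat -> is_lim_seq (F h) (L h)) ->
  is_lim_seq (fun M => rsum (fun h => F h M) N) (rsum L N).
Proof.
  induction N as [|N IH]; intros H; simpl; [apply is_lim_seq_const|].
  apply is_lim_seq_plus'; [apply IH; intros; apply H|apply H]; lia.
Qed.

Lemma is_lim_seq_infinite_sum f (l : R) : infinite_sum f l -> is_lim_seq (rsum f) l.
Proof.
  intros H. apply is_lim_seq_incr_1, is_lim_seq_Reals.
  intros e He. destruct (H e He) as [N HN]. exists N. intros n Hn.
  rewrite rsum_sum_f_R0. now apply HN.
Qed.

Lemma rsum_le_lim f (A : R) K :
  (forall k, 0 <= f k) -> is_lim_seq (rsum f) A -> rsum f K <= A.
Proof. intros Hf H. apply (is_lim_seq_lb _ _ K _ H). intros M HM. now apply rsum_incr. Qed.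

Lemma rsum_tail_window_le f (A : R) N s K : (forall i, 0 <= f i) -> is_lim_seq (rsum f) A ->
  rsum (fun h => if Nat.leb N (s + h) then f (s + h)%nat else 0) K <= A - rsum f N.
Proof.
  intros Hf HA. set (phi := fun i => if Nat.leb N i then f i else 0).
  assert (Hphi : forall i, 0 <= phi i) by (intros i; unfold phi; destruct (Nat.leb N i); [apply Hf | lra]).
  change (rsum (fun h => phi (s + h)%nat) K <= A - rsum f N).
  assert (Hwin : rsum (fun h => phi (s + h)%nat) K <= rsum phi (s + K)).
  { rewrite rsum_split. pose proof (rsum_nonneg phi s (fun k _ => Hphi k)). lra. }
  assert (Htail : rsum phi (N + (s + K)) = rsum f (N + (s + K)) - rsum f N).
  { rewrite (rsum_split phi N), (rsum_split f N), (rsum_ext phi (fun _ => 0) N), rsum_zero.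
    2:{ intros k Hk. unfold phi. destruct (Nat.leb_spec N k); [lia | reflexivity]. }
    rewrite (rsum_ext (fun k => phi (N + k)%nat) (fun k => f (N + k)%nat)); [ring|].
    intros k _. unfold phi. destruct (Nat.leb_spec N (N + k)); [reflexivity | lia]. }
  pose proof (rsum_incr phi (s + K) (N + (s + K)) Hphi ltac:(lia)).
  pose proof (rsum_le_lim f A (N + (s + K)) Hf HA).
  lra.
Qed.

(* The standard library's weighted [Cesaro] lemma, with weights [b (S n) - b n] and the
   difference quotients as values. *)
Lemma stolz_cesaro (a b : nat -> R) (l : R) :
  (forall n, 0 < b n) -> (forall n, b n < b (S n)) -> is_lim_seq b p_infty ->
  is_lim_seq (fun n => (a (S n) - a n) / (b (S n) - b n)) l ->
  is_lim_seq (fun n => a n / b n) l.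
Proof.
  intros Hb Hinc Hinf Hl.
  set (A := fun n => match n with O => b O | S k => b (S k) - b k end).
  set (B := fun n => match n with O => a O / b O | S k => (a (S k) - a k) / (b (S k) - b k) end).
  assert (HA : forall n, sum_f_R0 A n = b n).
  { induction n as [|n IH]; simpl; [reflexivity | rewrite IH; ring]. }
  assert (HAB : forall n, sum_f_R0 (fun k => A k * B k) n = a n).
  { induction n as [|n IH]; simpl; [field; apply Rgt_not_eq, Hb|].
    rewrite IH. pose proof (Hinc n). field. lra. }
  apply is_lim_seq_Reals.
  apply (Un_cv_ext (fun n => sum_f_R0 (fun k => A k * B k) n / sum_f_R0 A n)).
  { intros n. now rewrite HA, HAB. }
  apply Cesaro.
  - apply is_lim_seq_Reals, is_lim_seq_incr_1. exact Hl.
  - intros [|n]; simpl; [apply Hb | pose proof (Hinc n); lra].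
  - apply is_lim_seq_p_infty_Reals. now apply (is_lim_seq_ext b); [intros; rewrite HA|].
Qed.

Lemma is_lim_seq_dominated_rsum (g : nat -> R) (w : nat -> nat -> R) (Ag : R) :
  is_lim_seq (rsum (fun h => Rabs (g h))) Ag ->
  (forall T h, 0 <= w T h <= 1) -> (forall h, is_lim_seq (fun T => w T h) 0) ->
  is_lim_seq (fun T => rsum (fun h => Rabs (g h) * w T h) T) 0.
Proof.
  intros Hg Hw Hp. apply is_lim_seq_spec. intros eps.
  assert (He2 : 0 < eps / 2) by (destruct eps; simpl; lra).
  pose proof Hg as Hg'. apply is_lim_seq_spec in Hg'.
  destruct (Hg' (mkposreal _ He2)) as [K Htail0]. specialize (Htail0 K (le_n _)). simpl in Htail0.
  assert (Hhead : is_lim_seq (fun T => rsum (fun h => Rabs (g h) * w T h) K) 0).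
  { rewrite <- (rsum_zero K).
    apply (is_lim_seq_rsum (fun h T => Rabs (g h) * w T h)). intros h _.
    replace 0 with (Rabs (g h) * 0) by ring. apply (is_lim_seq_scal_l _ _ 0), Hp. }
  apply is_lim_seq_spec in Hhead. destruct (Hhead (mkposreal _ He2)) as [N1 HN1]. simpl in HN1.
  exists (N1 + K)%nat. intros T HT. specialize (HN1 T ltac:(lia)).
  assert (Hterm : forall k, 0 <= Rabs (g k) * w T k <= Rabs (g k)).
  { intros k. specialize (Hw T k). pose proof (Rabs_pos (g k)). split; nra. }
  assert (Hsplit := rsum_split (fun h => Rabs (g h) * w T h) K (T - K)).
  assert (Htail := rsum_split (fun h => Rabs (g h)) K (T - K)).
  replace (K + (T - K))%nat with T in Hsplit, Htail by lia.
  assert (Htail_le : rsum (fun k => Rabs (g (K + k)%nat) * w T (K + k)%nat) (T - K)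
                     <= rsum (fun k => Rabs (g (K + k)%nat)) (T - K)).
  { apply rsum_le. intros k _. apply Hterm. }
  pose proof (rsum_le_lim _ _ T (fun k => Rabs_pos (g k)) Hg).
  pose proof (rsum_nonneg (fun h => Rabs (g h) * w T h) K (fun k _ => proj1 (Hterm k))).
  pose proof (rsum_nonneg (fun k => Rabs (g (K + k)%nat) * w T (K + k)%nat) (T - K)
                (fun k _ => proj1 (Hterm (K + k)%nat))).
  rewrite Rminus_0_r in *. rewrite Rabs_right in * by (apply Rle_ge; lra).
  apply Rabs_lt_between' in Htail0. lra.
Qed.

Lemma INR_S_pos k : 0 < INR (S k).
Proof. apply lt_0_INR; lia. Qed.

Lemma sin_ge_third t : 0 <= t <= PI/2 -> t/3 <= sin t.
Proof.
  intros Ht. pose proof PI_4.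
  destruct (sin_bound t 0) as [H1 _]; [lra|lra|].
  unfold sin_approx, sin_term in H1. simpl in H1.
  assert (t * t <= 4) by nra. nra.
Qed.

Lemma cos_ge_quad y : - PI/2 <= y <= PI/2 -> 1 - y^2/2 <= cos y.
Proof.
  intros Hy. destruct (cos_bound y 0) as [H1 _]; [lra|lra|].
  unfold cos_approx, cos_term in H1. simpl in H1. lra.
Qed.

Lemma ln_ge_1_inv y : 0 < y -> 1 - / y <= ln y.
Proof.
  intros Hy. pose proof (exp_ineq1_le (ln (/ y))) as H.
  rewrite exp_ln, ln_Rinv in H by (auto; apply Rinv_0_lt_compat; auto). lra.
Qed.

Lemma ln_le_sub_1 y : 0 < y -> ln y <= y - 1.
Proof. intros Hy. pose proof (exp_ineq1_le (ln y)) as H. rewrite exp_ln in H by auto. lra. Qed.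

Lemma ln_1_plus_inv_bounds m : 0 < m -> / (m + 1) <= ln (1 + / m) <= / m.
Proof.
  intros Hm. assert (Hx : 0 < 1 + / m) by (pose proof (Rinv_0_lt_compat m Hm); lra).
  pose proof (ln_ge_1_inv _ Hx). pose proof (ln_le_sub_1 _ Hx).
  replace (1 - / (1 + / m)) with (/ (m + 1)) in * by (field; lra). lra.
Qed.

Lemma exp_le_inv_1_minus x : x < 1 -> exp x <= / (1 - x).
Proof.
  intros Hx. pose proof (exp_ineq1_le (- x)) as H. rewrite exp_Ropp in H.
  pose proof (exp_pos x).
  apply (Rmult_le_reg_r (1 - x)); [lra|]. rewrite Rinv_l by lra.
  apply (Rmult_le_reg_r (/ exp x)); [apply Rinv_0_lt_compat; assumption|].
  replace (exp x * (1 - x) * / exp x) with (1 - x) by (field; lra). lra.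
Qed.

Lemma Rpower_pos x y : 0 < Rpower x y.
Proof. apply exp_pos. Qed.

(** * Wallis integrals and the product formula for the sine *)

Lemma is_RInt_lincomb (f g : R -> R) (p q u v If Ig : R) :
  is_RInt f u v If -> is_RInt g u v Ig ->
  is_RInt (fun t => p * f t - q * g t) u v (p * If - q * Ig).
Proof.
  intros Hf Hg.
  apply (is_RInt_ext (fun t => minus (scal p (f t)) (scal q (g t)))); [reflexivity|].
  change (p * If - q * Ig) with (minus (scal p If) (scal q Ig)).
  apply (is_RInt_minus (V := R_NormedModule)); now apply (is_RInt_scal (V := R_NormedModule)).
Qed.

Lemma ex_RInt_lincomb (f g : R -> R) (p q u v : R) :
  ex_RInt f u v -> ex_RInt g u v -> ex_RInt (fun t => p * f t - q * g t) u v.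
Proof. intros [If Hf] [Ig Hg]. exists (p * If - q * Ig). now apply is_RInt_lincomb. Qed.

Lemma RInt_lincomb (f g : R -> R) (p q u v : R) :
  ex_RInt f u v -> ex_RInt g u v ->
  RInt (fun t => p * f t - q * g t) u v = p * RInt f u v - q * RInt g u v.
Proof.
  intros [If Hf] [Ig Hg].
  rewrite (is_RInt_unique f u v If Hf), (is_RInt_unique g u v Ig Hg).
  now apply is_RInt_unique, is_RInt_lincomb.
Qed.

Definition wallis_integrand (n : nat) (a t : R) : R := cos (a * t) * cos t ^ n.
Definition wallis (n : nat) (a : R) : R := RInt (wallis_integrand n a) 0 (PI/2).

Lemma wallis_integrand_continuous n a t : continuous (wallis_integrand n a) t.
Proof.
  apply (ex_derive_continuous (K := R_AbsRing) (V := R_NormedModule)).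
  unfold wallis_integrand. auto_derive. auto.
Qed.

Lemma ex_RInt_wallis_integrand n a u v : ex_RInt (wallis_integrand n a) u v.
Proof.
  apply (ex_RInt_continuous (V := R_CompleteNormedModule)). intros; apply wallis_integrand_continuous.
Qed.

Lemma is_derive_wallis_primitive (m : nat) (a t : R) :
  is_derive
    (fun t => (INR m + 2) * cos (a*t) * sin t * cos t ^ (S m) - a * sin (a*t) * cos t ^ (S (S m))) t
    (((INR m + 2)^2 - a^2) * wallis_integrand (S (S m)) a t
     - (INR m + 2) * (INR m + 1) * wallis_integrand m a t).
Proof.
  unfold wallis_integrand. auto_derive; auto.
  change (match m with 0%nat => 1 | S _ => INR m + 1 end) with (INR (S m)). rewrite S_INR.
  assert (Hpyth : sin t * sin t + cos t * cos t - 1 = 0).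
  { pose proof (sin2_cos2 t). unfold Rsqr in *. lra. }
  match goal with |- _ = ?R =>
    transitivity (R - (INR m + 2) * (INR m + 1) * cos (a*t) * cos t ^ m * (sin t * sin t + cos t * cos t - 1)) end.
  - simpl. ring.
  - rewrite Hpyth. ring.
Qed.

Lemma wallis_rec (m : nat) (a : R) :
  ((INR m + 2)^2 - a^2) * wallis (S (S m)) a = (INR m + 2) * (INR m + 1) * wallis m a.
Proof.
  apply Rminus_diag_uniq. unfold wallis.
  rewrite <- RInt_lincomb by apply ex_RInt_wallis_integrand.
  set (F := fun t => (INR m + 2) * cos (a*t) * sin t * cos t ^ (S m)
                     - a * sin (a*t) * cos t ^ (S (S m))).
  rewrite (is_RInt_unique _ 0 (PI/2) (minus (F (PI/2)) (F 0))).
  - unfold F, minus, plus, opp; simpl. rewrite cos_PI2, !Rmult_0_r, sin_0. ring.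
  - apply (is_RInt_derive (V := R_CompleteNormedModule)).
    + intros t _. apply is_derive_wallis_primitive.
    + intros t _. apply (ex_derive_continuous (K := R_AbsRing) (V := R_NormedModule)).
      unfold wallis_integrand. auto_derive. auto.
Qed.

Lemma wallis_0 (a : R) : a <> 0 -> wallis 0 a = sin (a * (PI/2)) / a.
Proof.
  intros Ha. unfold wallis. apply is_RInt_unique.
  apply (is_RInt_ext (fun t => cos (a*t))); [intros; unfold wallis_integrand; simpl; ring|].
  replace (sin (a * (PI / 2)) / a)
    with (minus ((fun t => sin (a*t)/a) (PI/2)) ((fun t => sin (a*t)/a) 0)).
  2:{ unfold minus, plus, opp; simpl. rewrite Rmult_0_r, sin_0. field. exact Ha. }
  apply (is_RInt_derive (V := R_CompleteNormedModule) (fun t => sin (a*t)/a)).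
  - intros. auto_derive; auto. field. exact Ha.
  - intros. apply (ex_derive_continuous (K := R_AbsRing) (V := R_NormedModule)). auto_derive. auto.
Qed.

Lemma wallis_0_0 : wallis 0 0 = PI/2.
Proof.
  unfold wallis. rewrite (RInt_ext _ (fun _ => 1)).
  - rewrite RInt_const. unfold scal; simpl; unfold mult; simpl; ring.
  - intros; unfold wallis_integrand; simpl. rewrite Rmult_0_l, cos_0; ring.
Qed.

Lemma wallis_rec_0 n : wallis (S (S n)) 0 = (INR n + 1) / (INR n + 2) * wallis n 0.
Proof.
  pose proof (wallis_rec n 0) as H. pose proof (pos_INR n).
  apply (Rmult_eq_reg_l ((INR n + 2)^2 - 0^2)); [|nra].
  rewrite H. field. lra.
Qed.

Lemma wallis_even_pos m : 0 < wallis (2*m) 0.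
Proof.
  induction m as [|m IH].
  - simpl. rewrite wallis_0_0. pose proof PI_RGT_0. lra.
  - replace (2 * S m)%nat with (S (S (2*m))) by lia. rewrite wallis_rec_0.
    pose proof (pos_INR (2*m)). apply Rmult_lt_0_compat; auto. apply Rdiv_lt_0_compat; lra.
Qed.

(* From [1 - cos y <= y^2/2] and [t <= 3 sin t]. *)
Lemma wallis_integrand_gap n a t : 0 <= a <= 1 -> 0 <= t <= PI/2 ->
  0 <= wallis_integrand n 0 t - wallis_integrand n a t
    <= 9 * a^2 / 2 * (wallis_integrand n 0 t - wallis_integrand (S (S n)) 0 t).
Proof.
  intros Ha Ht. pose proof PI_RGT_0.
  unfold wallis_integrand. simpl. rewrite Rmult_0_l, cos_0.
  assert (Hc : 0 <= cos t) by (apply cos_ge_0; lra).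
  pose proof (pow_le _ n Hc).
  pose proof (COS_bound (a*t)).
  pose proof (cos_ge_quad (a*t) ltac:(split; nra)).
  pose proof (sin_ge_third t Ht).
  pose proof (sin2_cos2 t). unfold Rsqr in *.
  assert (t*t <= 9 * (sin t * sin t)) by nra.
  assert (H9 : 1 - cos (a*t) <= 9/2 * a^2 * (1 - cos t * cos t)) by nra.
  split; [nra|].
  apply Rmult_le_compat_r with (r := cos t ^ n) in H9; [nra | assumption].
Qed.

Lemma wallis_gap n a : 0 <= a <= 1 ->
  0 <= wallis n 0 - wallis n a <= 9 * a^2 / 2 * (wallis n 0 / (INR n + 2)).
Proof.
  intros Ha. pose proof PI_RGT_0.
  assert (Hex := ex_RInt_lincomb _ _ 1 1 _ _ (ex_RInt_wallis_integrand n 0 0 (PI/2))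
                   (ex_RInt_wallis_integrand n a 0 (PI/2))).
  assert (Hex' := ex_RInt_lincomb _ _ (9*a^2/2) (9*a^2/2) _ _
                   (ex_RInt_wallis_integrand n 0 0 (PI/2))
                   (ex_RInt_wallis_integrand (S (S n)) 0 0 (PI/2))).
  assert (Eleft : wallis n 0 - wallis n a
    = RInt (fun t => 1 * wallis_integrand n 0 t - 1 * wallis_integrand n a t) 0 (PI/2)).
  { rewrite RInt_lincomb by apply ex_RInt_wallis_integrand. unfold wallis. ring. }
  assert (Eright : 9 * a^2 / 2 * (wallis n 0 / (INR n + 2))
    = RInt (fun t => 9*a^2/2 * wallis_integrand n 0 t
                     - 9*a^2/2 * wallis_integrand (S (S n)) 0 t) 0 (PI/2)).
  { rewrite RInt_lincomb by apply ex_RInt_wallis_integrand.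
    fold (wallis n 0) (wallis (S (S n)) 0). rewrite wallis_rec_0.
    pose proof (pos_INR n). field. lra. }
  rewrite Eleft, Eright.
  split.
  - apply RInt_ge_0; [lra | exact Hex |].
    intros t Ht. pose proof (wallis_integrand_gap n a t Ha ltac:(lra)). lra.
  - apply RInt_le; [lra | exact Hex | exact Hex' |].
    intros t Ht. pose proof (wallis_integrand_gap n a t Ha ltac:(lra)). lra.
Qed.

Fixpoint euler_prod (x : R) (m : nat) : R :=
  match m with O => 1 | S k => euler_prod x k * (1 - x^2 / (INR (S k))^2) end.

Lemma wallis_ratio_euler_prod x m : 0 < x < 1 ->
  wallis (2*m) (2*x) / wallis (2*m) 0 * euler_prod x m = sin (PI * x) / (PI * x).
Proof.
  intros Hx. pose proof PI_RGT_0.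
  induction m as [|m IH].
  - simpl. rewrite wallis_0_0, wallis_0 by lra.
    replace (2 * x * (PI/2)) with (PI * x) by field. field. lra.
  - rewrite <- IH. replace (2 * S m)%nat with (S (S (2*m))) by lia.
    pose proof (wallis_rec (2*m) (2*x)) as Hrec.
    pose proof (wallis_rec_0 (2*m)) as Hrec0.
    pose proof (wallis_even_pos m).
    rewrite mult_INR in Hrec, Hrec0. cbn [euler_prod]. rewrite (S_INR m).
    change (INR 2) with 2 in Hrec, Hrec0. pose proof (pos_INR m).
    set (M := INR m) in *. set (A := wallis (2*m) (2*x)) in *. set (B := wallis (2*m) 0) in *.
    assert (HA2 : wallis (S (S (2 * m))) (2*x) = (2*M+2)*(2*M+1)/((2*M+2)^2 - (2*x)^2) * A).
    { apply (Rmult_eq_reg_l ((2*M+2)^2 - (2*x)^2)); [|nra]. rewrite Hrec. field. nra. }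
    rewrite HA2, Hrec0. field. repeat split; nra.
Qed.

Lemma is_lim_seq_euler_prod x : 0 < x <= 1/2 ->
  is_lim_seq (euler_prod x) (sin (PI * x) / (PI * x)).
Proof.
  intros Hx.
  set (ratio := fun m => wallis (2*m) (2*x) / wallis (2*m) 0).
  assert (Hratio : forall m, 1 - 9 * x^2 / (INR m + 1) <= ratio m <= 1).
  { intros m. unfold ratio. pose proof (wallis_even_pos m) as Hp.
    destruct (wallis_gap (2*m) (2*x) ltac:(lra)) as [B1 B2].
    rewrite mult_INR in B2. change (INR 2) with 2 in B2. pose proof (pos_INR m).
    split.
    - apply (Rmult_le_reg_r (wallis (2*m) 0)); [exact Hp|].
      unfold Rdiv at 2. rewrite Rmult_assoc, Rinv_l, Rmult_1_r by lra.
      replace (9 * (2 * x) ^ 2 / 2 * (wallis (2 * m) 0 / (2 * INR m + 2)))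
        with (9 * x^2 / (INR m + 1) * wallis (2*m) 0) in B2 by (field; lra).
      lra.
    - apply (Rmult_le_reg_r (wallis (2*m) 0)); [exact Hp|].
      unfold Rdiv. rewrite Rmult_assoc, Rinv_l, Rmult_1_r by lra. lra. }
  assert (Hratio_lim : is_lim_seq ratio 1).
  { apply (is_lim_seq_rate _ _ (9 * x^2)). intros m. specialize (Hratio m).
    rewrite Rabs_left1 by lra. pose proof (pos_INR m). lra. }
  assert (Hsinc : 0 < sin (PI * x) / (PI * x)).
  { pose proof PI_RGT_0. apply Rdiv_lt_0_compat; [apply sin_gt_0|]; nra. }
  apply (is_lim_seq_ext (fun m => (sin (PI * x) / (PI * x)) / ratio m)).
  { intros m. pose proof (wallis_ratio_euler_prod x m ltac:(lra)) as E. fold (ratio m) in E.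
    assert (ratio m <> 0) by (intro Z; rewrite Z in E; lra).
    rewrite <- E. field. assumption. }
  pose proof (is_lim_seq_div' _ _ _ _ (is_lim_seq_const (sin (PI * x) / (PI * x)))
                Hratio_lim R1_neq_R0) as H.
  now rewrite Rdiv_1_r in H.
Qed.

(** * Asymptotics of the weights [r_t] *)

Lemma frac_pi_sub1_rec d n : frac_pi (d - 1) (S n) = frac_pi (d - 1) n * (1 - d / INR (S n)).
Proof.
  cbn [frac_pi]. pose proof (INR_S_pos n). f_equal. rewrite S_INR in *. field. lra.
Qed.

Lemma frac_pi_S_sub1 d n : frac_pi d (S n) = - d / INR (S n) * frac_pi (d - 1) n.
Proof.
  induction n as [|n IH]; [simpl; field|].
  change (frac_pi d (S (S n))) with (frac_pi d (S n) * ((INR (S n) - d) / INR (S (S n)))).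
  rewrite IH, frac_pi_sub1_rec. pose proof (INR_S_pos n). pose proof (INR_S_pos (S n)).
  rewrite (S_INR (S n)). field. lra.
Qed.

(* Summing the coefficients of (1-z)^d amounts to dividing by 1-z. *)
Lemma r_t_frac_pi d n : r_t d (S n) = frac_pi (d - 1) n.
Proof.
  unfold r_t. induction n as [|n IH]; [simpl; ring|].
  change (rsum (frac_pi d) (S (S n))) with (rsum (frac_pi d) (S n) + frac_pi d (S n)).
  rewrite IH, frac_pi_S_sub1, frac_pi_sub1_rec. pose proof (INR_S_pos n). field. lra.
Qed.

Lemma frac_pi_sub1_bounds d n : 0 < d < 1 -> 0 < frac_pi (d - 1) n <= 1.
Proof.
  intros Hd. induction n as [|n IH]; [simpl; lra|].
  rewrite frac_pi_sub1_rec. pose proof (INR_S_pos n). pose proof (pos_INR n). rewrite S_INR in *.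
  assert (0 < d / (INR n + 1) < 1) by
    (split; [apply Rdiv_lt_0_compat | apply Rcomplements.Rlt_div_l]; lra).
  split; nra.
Qed.

Lemma frac_pi_sub1_decr d n : 0 < d < 1 -> frac_pi (d - 1) (S n) <= frac_pi (d - 1) n.
Proof.
  intros Hd. rewrite frac_pi_sub1_rec. pose proof (frac_pi_sub1_bounds d n Hd).
  assert (0 < d / INR (S n)) by (apply Rdiv_lt_0_compat; [lra | apply INR_S_pos]).
  nra.
Qed.

Fixpoint gauss_prod (d : R) (n : nat) : R :=
  match n with O => 1 | S k => gauss_prod d k * (INR (S k) / (INR (S k) + d)) end.

Lemma gauss_prod_pos d n : 0 < d -> 0 < gauss_prod d n.
Proof.
  intros Hd. induction n as [|n IH]; cbn [gauss_prod]; [lra|].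
  pose proof (INR_S_pos n). apply Rmult_lt_0_compat; auto. apply Rdiv_lt_0_compat; lra.
Qed.

(* [1 - d/k = (1 - d^2/k^2) * k/(k+d)] *)
Lemma frac_pi_sub1_euler_gauss d n : 0 < d ->
  frac_pi (d - 1) n = euler_prod d n * gauss_prod d n.
Proof.
  intros Hd. induction n as [|n IH]; [simpl; ring|].
  rewrite frac_pi_sub1_rec, IH. cbn [euler_prod gauss_prod].
  pose proof (INR_S_pos n). field. lra.
Qed.

Lemma gauss_prod_rising_prod d n : 0 < d ->
  gauss_prod d n * rising_prod (d + 1) n = INR (fact n) * (d + 1 + INR n).
Proof.
  intros Hd. induction n as [|n IH]; [simpl; ring|].
  cbn [gauss_prod rising_prod]. rewrite fact_simpl, mult_INR.
  transitivity ((gauss_prod d n * rising_prod (d + 1) n)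
                * (INR (S n) / (INR (S n) + d)) * (d + 1 + INR (S n))); [ring|].
  rewrite IH, !S_INR. pose proof (pos_INR n). field. lra.
Qed.

(* The [n]-th term of Gauss's product for [Gamma (d + 1)] is [gauss_prod d n * n^d * n/(n+d+1)]. *)
Lemma is_lim_seq_gauss_prod d G : 0 < d -> is_Gamma (d + 1) G ->
  is_lim_seq (fun n => gauss_prod d n * Rpower (INR n) d) G.
Proof.
  intros Hd HG. unfold is_Gamma in HG. apply is_lim_seq_Reals, is_lim_seq_incr_1 in HG.
  apply is_lim_seq_incr_1.
  assert (H1 : is_lim_seq (fun n => 1 + (d + 1) * / (INR n + 1)) 1).
  { replace (Finite 1) with (Finite (1 + (d+1) * 0)) by (f_equal; ring).
    apply (is_lim_seq_plus' (fun _ => 1)); [apply is_lim_seq_const|].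
    apply (is_lim_seq_scal_l _ (d+1) 0), is_lim_seq_inv_S. }
  pose proof (is_lim_seq_mult' _ _ _ _ HG H1) as H. rewrite Rmult_1_r in H.
  revert H. apply is_lim_seq_ext. intros n.
  pose proof (gauss_prod_rising_prod d (S n) Hd) as E.
  pose proof (gauss_prod_pos d (S n) Hd).
  pose proof (INR_S_pos n). rewrite S_INR in *.
  pose proof (INR_fact_lt_0 (S n)).
  replace (rising_prod (d + 1) (S n))
    with (INR (fact (S n)) * (d + 1 + (INR n + 1)) / gauss_prod d (S n))
    by (rewrite <- E; field; lra).
  rewrite Rpower_plus, Rpower_1 by lra. field. repeat split; lra.
Qed.

Lemma Rpower_succ_ratio_ge m d : 0 < m -> 0 <= d ->
  (m + 1 + d) / (m + 1) <= Rpower ((m + 1) / m) d.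
Proof.
  intros Hm Hd.
  assert (Hy : 0 < (m + 1) / m) by (apply Rdiv_lt_0_compat; lra).
  pose proof (ln_ge_1_inv _ Hy) as Hln.
  replace (/ ((m + 1) / m)) with (m / (m + 1)) in Hln by (field; lra).
  pose proof (exp_ineq1_le (d * ln ((m + 1) / m))) as Hexp.
  replace ((m + 1 + d) / (m + 1)) with (1 + d * (1 - m / (m + 1))) by (field; lra).
  unfold Rpower. nra.
Qed.

Lemma gauss_prod_Rpower_incr d n : 0 < d ->
  gauss_prod d (S n) * Rpower (INR (S n)) d <= gauss_prod d (S (S n)) * Rpower (INR (S (S n))) d.
Proof.
  intros Hd. pose proof (INR_S_pos n) as Hm. set (m := INR (S n)) in *.
  change (gauss_prod d (S (S n))) with (gauss_prod d (S n) * (INR (S (S n)) / (INR (S (S n)) + d))).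
  replace (INR (S (S n))) with (m * ((m + 1) / m)) by (rewrite (S_INR (S n)); fold m; field; lra).
  rewrite <- Rpower_mult_distr by (try apply Rdiv_lt_0_compat; lra).
  replace (m * ((m + 1) / m)) with (m + 1) by (field; lra).
  pose proof (Rpower_succ_ratio_ge m d Hm ltac:(lra)) as Hratio.
  pose proof (gauss_prod_pos d (S n) Hd). pose proof (Rpower_pos m d).
  set (X := Rpower ((m + 1) / m) d) in *.
  assert (1 <= (m + 1) / (m + 1 + d) * X).
  { apply (Rmult_le_reg_l ((m + 1 + d) / (m + 1))); [apply Rdiv_lt_0_compat; lra|].
    replace ((m + 1 + d) / (m + 1) * ((m + 1) / (m + 1 + d) * X)) with X by (field; lra).
    lra. }
  assert (0 < gauss_prod d (S n) * Rpower m d) by (apply Rmult_lt_0_compat; assumption).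
  nra.
Qed.

Lemma is_Gamma_pos d G : 0 < d -> is_Gamma (d + 1) G -> 0 < G.
Proof.
  intros Hd HG. pose proof (is_lim_seq_gauss_prod d G Hd HG) as H.
  apply is_lim_seq_incr_1 in H.
  assert (Hlb : forall n, / (1 + d) <= gauss_prod d (S n) * Rpower (INR (S n)) d).
  { induction n as [|n IH].
    - cbn [gauss_prod]. change (INR 1) with 1. unfold Rpower. rewrite ln_1, Rmult_0_r, exp_0.
      right. field. lra.
    - pose proof (gauss_prod_Rpower_incr d n Hd). lra. }
  pose proof (is_lim_seq_lb _ _ 0 _ H (fun n _ => Hlb n)).
  assert (0 < / (1 + d)) by (apply Rinv_0_lt_compat; lra). lra.
Qed.

Lemma is_lim_seq_frac_pi_sub1 d G : 0 < d <= 1/2 -> is_Gamma (d + 1) G ->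
  is_lim_seq (fun n => frac_pi (d - 1) n * Rpower (INR n) d) (sin (PI * d) / (PI * d) * G).
Proof.
  intros Hd HG.
  pose proof (is_lim_seq_mult' _ _ _ _ (is_lim_seq_euler_prod d Hd)
                (is_lim_seq_gauss_prod d G ltac:(lra) HG)) as H.
  revert H. apply is_lim_seq_ext. intros n. rewrite frac_pi_sub1_euler_gauss by lra. ring.
Qed.

Lemma Rpower_1_plus_inv_bounds m al : 1 <= m -> 0 < al < 1 ->
  al - al / m <= m * (Rpower (1 + / m) al - 1) <= al + 2 * al^2 / (1 - al) / m.
Proof.
  intros Hm Hal. destruct (ln_1_plus_inv_bounds m ltac:(lra)) as [Hy1 Hy2].
  unfold Rpower. set (y := ln (1 + / m)) in *.
  assert (/ (m + 1) <= / m) by (apply Rinv_le_contravar; lra).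
  assert (0 < / (m + 1)) by (apply Rinv_0_lt_compat; lra).
  assert (Hw : al / m < 1) by (apply Rcomplements.Rlt_div_l; lra).
  assert (Hz : al * y <= al / m) by (apply Rmult_le_compat_l; lra).
  split.
  - pose proof (exp_ineq1_le (al * y)).
    assert (al * / (m + 1) <= al * y) by (apply Rmult_le_compat_l; lra).
    assert (al / (m + 1) <= al / m) by (apply Rmult_le_compat_l; lra).
    assert (m * (al * / (m + 1)) <= m * (exp (al * y) - 1)) by (apply Rmult_le_compat_l; lra).
    replace (al - al / m) with (m * (al * / (m + 1)) - (al / m - al / (m + 1))) by (field; lra).
    lra.
  - pose proof (exp_le_inv_1_minus (al * y) ltac:(lra)).
    assert (/ (1 - al * y) <= / (1 - al / m)) by (apply Rinv_le_contravar; lra).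
    assert (Hgap : al^2 / (m - al) <= 2 * al^2 / (1 - al) / m).
    { replace (2 * al ^ 2 / (1 - al) / m) with (al^2 / ((1 - al) * m / 2)) by (field; lra).
      apply Rmult_le_compat_l; [nra|].
      apply Rinv_le_contravar; [|nra]. apply Rmult_lt_0_compat; [|lra]. nra. }
    assert (m * (exp (al * y) - 1) <= m * (/ (1 - al / m) - 1)) by (apply Rmult_le_compat_l; lra).
    replace (m * (/ (1 - al / m) - 1)) with (al + al^2 / (m - al)) in * by (field; lra).
    lra.
Qed.

Lemma is_lim_seq_Rpower_1_plus_inv al : 0 < al < 1 ->
  is_lim_seq (fun n => INR (S n) * (Rpower (1 + / INR (S n)) al - 1)) al.
Proof.
  intros Hal. apply (is_lim_seq_rate _ _ (al + 2 * al^2 / (1 - al))). intros n.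
  pose proof (pos_INR n). rewrite S_INR.
  destruct (Rpower_1_plus_inv_bounds (INR n + 1) al ltac:(lra) Hal).
  assert (0 <= 2 * al^2 / (1 - al)) by (apply Rcomplements.Rdiv_le_0_compat; nra).
  replace ((al + 2 * al ^ 2 / (1 - al)) / (INR n + 1))
    with (al / (INR n + 1) + 2 * al ^ 2 / (1 - al) / (INR n + 1)) by (field; lra).
  assert (0 <= al / (INR n + 1)) by (apply Rcomplements.Rdiv_le_0_compat; lra).
  assert (0 <= 2 * al ^ 2 / (1 - al) / (INR n + 1)) by (apply Rcomplements.Rdiv_le_0_compat; lra).
  apply Rabs_le. lra.
Qed.

Lemma is_lim_seq_Rpower_INR al : 0 < al -> is_lim_seq (fun n => Rpower (INR (S n)) al) p_infty.
Proof.
  intros Hal. apply is_lim_seq_spec. intros M.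
  set (K := Rpower (Rabs M + 1) (/ al)).
  destruct (INR_unbounded K) as [N HN].
  exists N. intros n Hn.
  assert (INR N <= INR (S n)) by (apply le_INR; lia).
  assert (0 < K) by apply Rpower_pos.
  assert (Rpower K al <= Rpower (INR (S n)) al) as HK by (apply Rle_Rpower_l; lra).
  unfold K in HK. rewrite Rpower_mult, Rinv_l, Rpower_1 in HK by (pose proof (Rabs_pos M); lra).
  pose proof (Rle_abs M). lra.
Qed.

Definition r_sqsum (d : R) (T : nat) : R := rsum (fun t => r_t d (S t) ^ 2) T.

Lemma is_lim_seq_r_sqsum d G : 0 < d < 1/2 -> is_Gamma (d + 1) G ->
  is_lim_seq (fun T => r_sqsum d T / Rpower (INR T) (1 - 2*d))
    ((sin (PI * d) / (PI * d) * G) ^ 2 / (1 - 2*d)).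
Proof.
  intros Hd HG. set (al := 1 - 2*d). assert (Hal : 0 < al < 1) by (unfold al; lra).
  apply is_lim_seq_incr_1.
  apply (stolz_cesaro (fun n => r_sqsum d (S n)) (fun n => Rpower (INR (S n)) al)).
  - intros; apply Rpower_pos.
  - intros n. apply Rlt_Rpower_l; [lra|]. split; [apply INR_S_pos | apply lt_INR; lia].
  - apply is_lim_seq_Rpower_INR. lra.
  - pose proof (is_lim_seq_frac_pi_sub1 d G ltac:(lra) HG) as Hf. apply is_lim_seq_incr_1 in Hf.
    pose proof (is_lim_seq_div' _ _ _ _ (is_lim_seq_mult' _ _ _ _ Hf Hf)
                  (is_lim_seq_Rpower_1_plus_inv al Hal) ltac:(lra)) as H.
    rewrite <- Rsqr_pow2. revert H. apply is_lim_seq_ext. intros n.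
    replace (r_sqsum d (S (S n)) - r_sqsum d (S n)) with (frac_pi (d - 1) (S n) ^ 2)
      by (unfold r_sqsum; cbn [rsum]; rewrite (r_t_frac_pi d (S n)); ring).
    pose proof (INR_S_pos n) as Hm. set (m := INR (S n)) in *.
    assert (Hx : 0 < 1 + / m) by (pose proof (Rinv_0_lt_compat m Hm); lra).
    replace (INR (S (S n))) with (m * (1 + / m)) by (rewrite (S_INR (S n)); fold m; field; lra).
    rewrite <- Rpower_mult_distr by lra.
    assert (E : Rpower m d * Rpower m d * Rpower m al = m).
    { rewrite <- !Rpower_plus. unfold al. replace (d + d + (1 - 2 * d)) with 1 by ring.
      now apply Rpower_1. }
    assert (1 < Rpower (1 + / m) al).
    { rewrite <- (Rpower_O (1 + / m)) at 1 by lra. apply Rpower_lt; [|lra].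
      pose proof (Rinv_0_lt_compat m Hm); lra. }
    pose proof (Rpower_pos m al). pose proof (Rpower_pos m d).
    assert (0 < Rpower m al * (Rpower (1 + / m) al - 1)) by (apply Rmult_lt_0_compat; lra).
    rewrite <- E at 3. unfold Rsqr. field. repeat split; lra.
Qed.

Lemma r_t_bounds d k : 0 < d < 1 -> 0 < r_t d (S k) <= 1.
Proof. intros Hd. rewrite r_t_frac_pi. now apply frac_pi_sub1_bounds. Qed.

Lemma r_t_decreasing d : 0 < d < 1 -> Un_decreasing (fun k => r_t d (S k)).
Proof. intros Hd k. rewrite !r_t_frac_pi. now apply frac_pi_sub1_decr. Qed.

Lemma r_sqsum_pos d n : 0 < d < 1 -> 0 < r_sqsum d (S n).
Proof. intros Hd. apply (rsum_sq_pos (fun k => r_t d (S k))). intros k. now apply r_t_bounds. Qed.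

Lemma sinc_Gamma_pos d G : 0 < d < 1 -> is_Gamma (d + 1) G -> 0 < sin (PI * d) / (PI * d) * G.
Proof.
  intros Hd HG. pose proof PI_RGT_0. pose proof (is_Gamma_pos d G ltac:(lra) HG).
  apply Rmult_lt_0_compat; [|assumption].
  apply Rdiv_lt_0_compat; [apply sin_gt_0|]; nra.
Qed.

Lemma is_lim_seq_r_sqsum_p_infty d G : 0 < d < 1/2 -> is_Gamma (d + 1) G ->
  is_lim_seq (r_sqsum d) p_infty.
Proof.
  intros Hd HG. apply is_lim_seq_incr_1.
  pose proof (sinc_Gamma_pos d G ltac:(lra) HG) as HEG.
  assert (HL : 0 < (sin (PI * d) / (PI * d) * G) ^ 2 / (1 - 2 * d))
    by (apply Rdiv_lt_0_compat; [apply pow_lt|]; lra).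
  pose proof (is_lim_seq_r_sqsum d G Hd HG) as HS. apply is_lim_seq_incr_1 in HS.
  pose proof (is_lim_seq_mult _ _ _ _ p_infty (is_lim_seq_Rpower_INR (1 - 2 * d) ltac:(lra)) HS
                (is_Rbar_mult_p_infty_pos (Finite _) HL)) as H.
  revert H. apply is_lim_seq_ext. intros n. pose proof (Rpower_pos (INR (S n)) (1 - 2 * d)).
  field. lra.
Qed.

(** * The estimator as a linear form in [x_1, ..., x_T] *)

Lemma frac_pi_rec delta k : INR (S k) * frac_pi delta (S k) = (INR k - delta) * frac_pi delta k.
Proof. cbn [frac_pi]. pose proof (INR_S_pos k). field. lra. Qed.

Definition frac_pi_conv (d : R) (n : nat) : R :=
  rsum (fun j => frac_pi d j * frac_pi (-d) (n - j)) (S n).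

(* The coefficient of [z^n] in [(1-z) (f g)' = 0], where [f = (1-z)^d] and [g = (1-z)^-d]. *)
Lemma frac_pi_conv_rec d n : INR (S n) * frac_pi_conv d (S n) = INR n * frac_pi_conv d n.
Proof.
  unfold frac_pi_conv.
  transitivity (rsum (fun j => INR j * frac_pi d j * frac_pi (-d) (S n - j)) (S (S n))
              + rsum (fun j => frac_pi d j * (INR (S n - j) * frac_pi (-d) (S n - j))) (S (S n))).
  { rewrite <- rsum_plus, <- rsum_scal. apply rsum_ext. intros k Hk.
    rewrite minus_INR, S_INR by lia. ring. }
  rewrite rsum_recl. change (INR 0) with 0. rewrite !Rmult_0_l, Rplus_0_l.
  set (f := fun j => frac_pi d j * (INR (S n - j) * frac_pi (-d) (S n - j))).
  change (rsum f (S (S n))) with (rsum f (S n) + f (S n)).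
  unfold f at 2. rewrite Nat.sub_diag. change (INR 0) with 0. rewrite Rmult_0_l, Rmult_0_r, Rplus_0_r.
  unfold f.
  rewrite <- rsum_plus, <- rsum_scal. apply rsum_ext. intros k Hk.
  replace (S n - S k)%nat with (n - k)%nat by lia.
  replace (S n - k)%nat with (S (n - k)) by lia.
  rewrite (frac_pi_rec d k), (frac_pi_rec (-d) (n - k)), minus_INR by lia. ring.
Qed.

Lemma frac_pi_conv_eq d n : frac_pi_conv d n = if Nat.eqb n 0 then 1 else 0.
Proof.
  destruct n as [|n]; [unfold frac_pi_conv; simpl; ring|].
  induction n as [|n IH].
  - pose proof (frac_pi_conv_rec d 0) as H. simpl INR in H. simpl. lra.
  - pose proof (frac_pi_conv_rec d (S n)) as H. simpl Nat.eqb in *. rewrite IH, Rmult_0_r in H.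
    pose proof (INR_S_pos (S n)). nra.
Qed.

Lemma snd_rv_sum F n s : snd (rv_sum F n) s = rsum (fun j => snd (F j) s) n.
Proof. induction n as [|n IH]; simpl; [reflexivity | now rewrite IH]. Qed.

Lemma snd_y_rv d mu t s : (1 <= s)%nat ->
  snd (y_rv d mu t) s = if Nat.leb s t then frac_pi (-d) (t - s) else 0.
Proof.
  intros Hs. unfold y_rv, rv_add. simpl snd. rewrite snd_rv_sum, Rplus_0_l, rsum_rev.
  transitivity (rsum (fun k => frac_pi (-d) (t - 1 - k) * (if Nat.eqb s (S k) then 1 else 0)) t).
  { apply rsum_ext. intros k Hk. unfold rv_scale, x_rv. simpl snd.
    now replace (t - (t - 1 - k))%nat with (S k) by lia. }
  rewrite rsum_indicator by assumption.
  destruct (Nat.leb_spec s t); [f_equal; lia | reflexivity].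
Qed.

Lemma snd_dy_rv d mu t s : (1 <= s)%nat ->
  snd (dy_rv d mu t) s = if Nat.eqb s t then 1 else 0.
Proof.
  intros Hs. unfold dy_rv. rewrite snd_rv_sum.
  transitivity (rsum (fun j => frac_pi d j
                  * (if Nat.leb s (t - j) then frac_pi (-d) (t - j - s) else 0)) t).
  { apply rsum_ext. intros k Hk. unfold rv_scale. cbn [snd]. now rewrite snd_y_rv. }
  destruct (Nat.leb_spec s t) as [Hst|Hst].
  - rewrite (rsum_trunc _ (S (t - s))); [| lia |].
    2:{ intros k Hk. destruct (Nat.leb_spec s (t - k)); [lia | ring]. }
    transitivity (frac_pi_conv d (t - s)).
    + apply rsum_ext. intros k Hk.
      destruct (Nat.leb_spec s (t - k)); [|lia]. do 2 f_equal. lia.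
    + rewrite frac_pi_conv_eq.
      destruct (Nat.eqb_spec (t - s) 0), (Nat.eqb_spec s t); (lia || reflexivity).
  - destruct (Nat.eqb_spec s t); [lia|].
    transitivity (rsum (fun _ => 0) t); [|apply rsum_zero].
    apply rsum_ext. intros k Hk. destruct (Nat.leb_spec s (t - k)); [lia | ring].
Qed.

Lemma snd_muhat d mu T s : (1 <= s)%nat ->
  snd (muhat d mu T) s = / r_sqsum d T * (if Nat.leb s T then r_t d s else 0).
Proof.
  intros Hs. unfold muhat, rv_scale. cbn [snd]. f_equal.
  rewrite snd_rv_sum.
  transitivity (rsum (fun k => r_t d (S k) * (if Nat.eqb s (S k) then 1 else 0)) T).
  { apply rsum_ext. intros k Hk. cbn [snd]. now rewrite snd_dy_rv. }
  rewrite rsum_indicator by assumption. destruct (Nat.leb s T); [f_equal; lia | reflexivity].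
Qed.

Definition quad_form (a g : nat -> R) (T : nat) : R :=
  rsum (fun s => rsum (fun u => a s * a u * g (absdiff s u)) T) T.

Lemma rv_var_muhat d mu gam T :
  rv_var gam T (muhat d mu T) = quad_form (fun k => r_t d (S k)) gam T / r_sqsum d T ^ 2.
Proof.
  unfold rv_var, quad_form, Rdiv. rewrite Rmult_comm, <- rsum_scal. apply rsum_ext. intros s Hs.
  rewrite <- rsum_scal. apply rsum_ext. intros u Hu.
  rewrite !snd_muhat by lia.
  destruct (Nat.leb_spec (S s) T), (Nat.leb_spec (S u) T); try lia.
  change (absdiff (S s) (S u)) with (absdiff s u).
  destruct (Req_dec (r_sqsum d T) 0) as [Z|Z].
  - rewrite Z, pow_i, Rinv_0 by lia. ring.
  - field. exact Z.
Qed.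

(** * Quadratic forms with Toeplitz coefficients *)

Definition lag_sum (a : nat -> R) (h T : nat) : R := rsum (fun s => a s * a (s + h)%nat) (T - h).

Lemma lag_sum_0 a T : lag_sum a 0 T = rsum (fun s => a s ^ 2) T.
Proof. unfold lag_sum. rewrite Nat.sub_0_r. apply rsum_ext. intros. rewrite Nat.add_0_r. ring. Qed.

Lemma lag_sum_S a h T : (h <= T)%nat -> lag_sum a h (S T) = lag_sum a h T + a (T - h)%nat * a T.
Proof.
  intros Hh. unfold lag_sum. replace (S T - h)%nat with (S (T - h)) by lia. cbn [rsum].
  now replace (T - h + h)%nat with T by lia.
Qed.

Lemma absdiff_lt s T : (s < T)%nat -> absdiff s T = (T - s)%nat /\ absdiff T s = (T - s)%nat.
Proof.
  intros H. unfold absdiff.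
  destruct (Nat.leb_spec s T), (Nat.leb_spec T s); split; lia.
Qed.

Lemma quad_form_S a g T : quad_form a g (S T) =
  quad_form a g T + 2 * rsum (fun s => g (T - s)%nat * (a s * a T)) T + a T ^ 2 * g 0%nat.
Proof.
  unfold quad_form. cbn [rsum].
  rewrite (rsum_ext (fun s => rsum _ T + _) (fun s => rsum (fun u => a s * a u * g (absdiff s u)) T
                                                     + g (T - s)%nat * (a s * a T))).
  2:{ intros s Hs. destruct (absdiff_lt s T Hs) as [-> _]. f_equal. ring. }
  rewrite (rsum_ext (fun u => a T * a u * g (absdiff T u)) (fun u => g (T - u)%nat * (a u * a T))).
  2:{ intros u Hu. destruct (absdiff_lt u T Hu) as [_ ->]. ring. }
  unfold absdiff. rewrite Nat.leb_refl, Nat.sub_diag, rsum_plus. ring.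
Qed.

Lemma quad_form_lags a g T : quad_form a g T =
  g 0%nat * lag_sum a 0 T + 2 * rsum (fun h => g (S h) * lag_sum a (S h) T) T.
Proof.
  induction T as [|T IH]; [unfold quad_form, lag_sum; simpl; ring|].
  rewrite quad_form_S, IH, lag_sum_S by lia. cbn [rsum].
  replace (lag_sum a (S T) (S T)) with 0 by (unfold lag_sum; now rewrite Nat.sub_diag).
  rewrite (rsum_ext (fun h => g (S h) * lag_sum a (S h) (S T))
             (fun h => g (S h) * lag_sum a (S h) T + g (S h) * (a (T - S h)%nat * a T))).
  2:{ intros h Hh. rewrite lag_sum_S by lia. ring. }
  rewrite rsum_plus, (rsum_rev (fun s => g (T - s)%nat * (a s * a T))).
  rewrite (rsum_ext (fun k => g (T - (T - 1 - k))%nat * (a (T - 1 - k)%nat * a T))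
             (fun h => g (S h) * (a (T - S h)%nat * a T))).
  2:{ intros h Hh. replace (T - (T - 1 - h))%nat with (S h) by lia.
      now replace (T - 1 - h)%nat with (T - S h)%nat by lia. }
  rewrite Nat.sub_0_r. ring.
Qed.

Lemma lag_sum_gap a h T : (forall k, 0 <= a k <= 1) -> Un_decreasing a ->
  0 <= lag_sum a (S h) T /\ 0 <= lag_sum a 0 T - lag_sum a (S h) T <= 2 * INR (S h).
Proof.
  intros Ha Hdec. rewrite lag_sum_0. unfold lag_sum.
  set (K := (T - S h)%nat).
  assert (Hmono : forall s, a (s + S h)%nat <= a s) by (intros; apply decreasing_prop; [auto | lia]).
  assert (Hsplit : rsum (fun s => a s ^ 2) T
                   = rsum (fun s => a s ^ 2) K + rsum (fun i => a (K + i)%nat ^ 2) (T - K)).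
  { rewrite <- rsum_split. f_equal. unfold K; lia. }
  assert (0 <= rsum (fun s => a s * a (s + S h)%nat) K).
  { apply rsum_nonneg. intros k _. apply Rmult_le_pos; apply Ha. }
  assert (0 <= rsum (fun i => a (K + i)%nat ^ 2) (T - K) <= INR (S h)).
  { split; [apply rsum_nonneg; intros; apply pow2_ge_0|].
    apply (Rle_trans _ (rsum (fun _ => 1) (T - K))).
    - apply rsum_le. intros k _. specialize (Ha (K + k)%nat). nra.
    - rewrite rsum_const, Rmult_1_r. apply le_INR. unfold K; lia. }
  assert (0 <= rsum (fun s => a s ^ 2) K - rsum (fun s => a s * a (s + S h)%nat) K
            <= rsum (fun s => a s - a (s + S h)%nat) K).
  { rewrite <- rsum_minus. split; [apply rsum_nonneg | apply rsum_le]; intros k _;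
      pose proof (Hmono k); pose proof (Ha (k + S h)%nat); pose proof (Ha k); nra. }
  rewrite rsum_sub_shift in *.
  assert (rsum a (S h) <= INR (S h)).
  { apply (Rle_trans _ (rsum (fun _ => 1) (S h))); [apply rsum_le; intros; apply Ha|].
    rewrite rsum_const. lra. }
  assert (0 <= rsum (fun i => a (K + i)%nat) (S h)) by (apply rsum_nonneg; intros; apply Ha).
  lra.
Qed.

Lemma quad_form_ratio_eq a g T : 0 < lag_sum a 0 T ->
  quad_form a g T / lag_sum a 0 T = g 0%nat + 2 * rsum (fun h => g (S h)) T
    - 2 * rsum (fun h => g (S h) * (1 - lag_sum a (S h) T / lag_sum a 0 T)) T.
Proof.
  intros HS. rewrite quad_form_lags.
  rewrite (rsum_ext (fun h => g (S h) * (1 - lag_sum a (S h) T / lag_sum a 0 T))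
             (fun h => g (S h) - / lag_sum a 0 T * (g (S h) * lag_sum a (S h) T)))
    by (intros; field; lra).
  rewrite rsum_minus, rsum_scal. field. lra.
Qed.

Lemma lag_weight_bounds a h T : (forall k, 0 <= a k <= 1) -> Un_decreasing a ->
  0 <= 1 - lag_sum a (S h) T / lag_sum a 0 T <= 1.
Proof.
  intros Ha Hdec. destruct (lag_sum_gap a h T Ha Hdec) as [H1 H2].
  destruct (Req_dec (lag_sum a 0 T) 0) as [Z|Z].
  - rewrite Z. unfold Rdiv. rewrite Rinv_0, Rmult_0_r. lra.
  - assert (0 <= lag_sum a (S h) T / lag_sum a 0 T <= 1).
    { split; [apply Rcomplements.Rdiv_le_0_compat | apply Rcomplements.Rle_div_l]; lra. }
    lra.
Qed.

Lemma lag_weight_le a h T : (forall k, 0 <= a k <= 1) -> Un_decreasing a -> 0 < lag_sum a 0 T ->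
  1 - lag_sum a (S h) T / lag_sum a 0 T <= 2 * INR (S h) * / lag_sum a 0 T.
Proof.
  intros Ha Hdec HS. destruct (lag_sum_gap a h T Ha Hdec).
  replace (1 - lag_sum a (S h) T / lag_sum a 0 T)
    with ((lag_sum a 0 T - lag_sum a (S h) T) * / lag_sum a 0 T) by (field; lra).
  apply Rmult_le_compat_r; [left; apply Rinv_0_lt_compat|]; lra.
Qed.

Lemma quad_form_ratio_err a g T : (forall k, 0 <= a k <= 1) -> Un_decreasing a ->
  0 < lag_sum a 0 T ->
  Rabs (quad_form a g T / lag_sum a 0 T - (g 0%nat + 2 * rsum (fun h => g (S h)) T))
  <= 2 * rsum (fun h => Rabs (g (S h)) * (1 - lag_sum a (S h) T / lag_sum a 0 T)) T.
Proof.
  intros Ha Hdec HS. rewrite quad_form_ratio_eq by exact HS.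
  match goal with |- Rabs (?A - ?B - ?A) <= _ => replace (A - B - A) with (- B) by ring end.
  rewrite Rabs_Ropp, Rabs_mult, (Rabs_right 2) by lra.
  apply Rmult_le_compat_l; [lra|]. eapply Rle_trans; [apply Rabs_rsum_le|].
  apply rsum_le. intros k _. pose proof (lag_weight_bounds a k T Ha Hdec).
  rewrite Rabs_mult, (Rabs_right (1 - _)); lra.
Qed.

(* For fixed [h] the weight [1 - lag_sum a (S h) T / lag_sum a 0 T] tends to 0, because the
   sum of squares diverges while the gap stays below [2 (h + 1)]; dominated convergence then
   applies to the summable autocovariances. *)
Lemma quad_form_ratio_lim (a g : nat -> R) (Ag Om : R) :
  (forall k, 0 < a k <= 1) -> Un_decreasing a ->
  is_lim_seq (rsum (fun s => a s ^ 2)) p_infty ->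
  is_lim_seq (rsum (fun h => Rabs (g h))) Ag ->
  is_lim_seq (fun N => g 0%nat + 2 * rsum (fun h => g (S h)) N) Om ->
  is_lim_seq (fun T => quad_form a g T / rsum (fun s => a s ^ 2) T) Om.
Proof.
  intros Ha Hdec Hdiv Hg HOm.
  assert (Ha' : forall k, 0 <= a k <= 1) by (intros k; specialize (Ha k); lra).
  assert (Hpos : forall n, 0 < lag_sum a 0 (S n))
    by (intros n; rewrite lag_sum_0; apply rsum_sq_pos; apply Ha).
  set (w := fun T h => 1 - lag_sum a (S h) T / lag_sum a 0 T).
  assert (Hwlim : forall h, is_lim_seq (fun T => w T h) 0).
  { intros h. apply is_lim_seq_incr_1.
    apply (is_lim_seq_abs_le_0 _ (fun n => 2 * INR (S h) * / lag_sum a 0 (S n))).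
    - intros n. pose proof (lag_weight_bounds a h (S n) Ha' Hdec). unfold w.
      rewrite Rabs_right by lra. now apply lag_weight_le.
    - replace (Finite 0) with (Finite (2 * INR (S h) * 0)) by (f_equal; ring).
      apply (is_lim_seq_scal_l _ _ 0).
      apply is_lim_seq_incr_1 in Hdiv. apply (is_lim_seq_inv _ p_infty) in Hdiv; [|discriminate].
      revert Hdiv. apply is_lim_seq_ext. intros n. now rewrite lag_sum_0. }
  assert (Hg1 : is_lim_seq (rsum (fun h => Rabs (g (S h)))) (Ag - Rabs (g 0%nat))).
  { apply is_lim_seq_incr_1 in Hg.
    apply (is_lim_seq_ext (fun H => rsum (fun h => Rabs (g h)) (S H) - Rabs (g 0%nat)));
      [intros; rewrite rsum_recl; ring|].
    apply is_lim_seq_minus'; [exact Hg | apply is_lim_seq_const]. }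
  pose proof (is_lim_seq_dominated_rsum _ w _ Hg1
                (fun T h => lag_weight_bounds a h T Ha' Hdec) Hwlim) as Hdom.
  apply is_lim_seq_incr_1 in Hdom, HOm. apply is_lim_seq_incr_1.
  assert (Herr : is_lim_seq (fun n => quad_form a g (S n) / lag_sum a 0 (S n)
                   - (g 0%nat + 2 * rsum (fun h => g (S h)) (S n))) 0).
  { apply (is_lim_seq_abs_le_0 _ (fun n => 2 * rsum (fun h => Rabs (g (S h)) * w (S n) h) (S n))).
    - intros n. now apply quad_form_ratio_err.
    - replace (Finite 0) with (Finite (2 * 0)) by (f_equal; ring).
      now apply (is_lim_seq_scal_l _ 2 0). }
  pose proof (is_lim_seq_plus' _ _ _ _ HOm Herr) as H. rewrite Rplus_0_r in H.
  revert H. apply is_lim_seq_ext. intros n. rewrite <- lag_sum_0. ring.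
Qed.

(** * The long-run variance *)

Lemma quad_form_const1 a T : quad_form a (fun _ => 1) T = rsum a T ^ 2.
Proof.
  unfold quad_form. rewrite <- Rsqr_pow2. unfold Rsqr. rewrite <- rsum_scal.
  apply rsum_ext. intros s _. rewrite Rmult_comm, <- rsum_scal. apply rsum_ext. intros; ring.
Qed.

Section LongRunVariance.

Variables (c : nat -> R) (sigma2 : R) (gam : nat -> R) (A : R).
Hypothesis Hsigma : 0 < sigma2.
Hypothesis Hgam : is_autocov c sigma2 gam.
Hypothesis HA : is_lim_seq (rsum (fun j => Rabs (c j))) A.

Lemma is_lim_seq_cross_sum h :
  is_lim_seq (rsum (fun j => c j * c (j + h)%nat)) (gam h / sigma2).
Proof.
  pose proof (is_lim_seq_scal_l _ (/ sigma2) _ (is_lim_seq_infinite_sum _ _ (Hgam h))) as H.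
  simpl in H. replace (gam h / sigma2) with (/ sigma2 * gam h) by (unfold Rdiv; ring).
  revert H. apply is_lim_seq_ext. intros M. rewrite rsum_scal. field. lra.
Qed.

Lemma cross_sum_sub_lag_sum h N M : (h <= N)%nat -> (N <= M)%nat ->
  rsum (fun j => c j * c (j + h)%nat) M - lag_sum c h N =
  rsum (fun j => if Nat.leb N (j + h) then c j * c (j + h)%nat else 0) M.
Proof.
  intros H1 H2. unfold lag_sum.
  rewrite (rsum_ext (fun j => c j * c (j + h)%nat)
             (fun j => (if Nat.leb N (j + h) then 0 else c j * c (j + h)%nat)
                       + (if Nat.leb N (j + h) then c j * c (j + h)%nat else 0)))
    by (intros k _; destruct (Nat.leb N (k + h)); ring).
  rewrite rsum_plus, (rsum_trunc _ (N - h)); [| lia |].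
  2:{ intros k Hk. destruct (Nat.leb_spec N (k + h)); [reflexivity | lia]. }
  rewrite (rsum_ext _ (fun j => c j * c (j + h)%nat) (N - h)); [ring|].
  intros k Hk. destruct (Nat.leb_spec N (k + h)); [lia | reflexivity].
Qed.

Lemma cross_sum_tails_le N M :
  rsum (fun h => rsum (fun j => if Nat.leb N (j + h)
                                then Rabs (c j) * Rabs (c (j + h)%nat) else 0) M) (S N)
  <= A * (A - rsum (fun i => Rabs (c i)) N).
Proof.
  rewrite rsum_swap.
  assert (Hc : forall i, 0 <= Rabs (c i)) by (intros; apply Rabs_pos).
  apply (Rle_trans _ (rsum (fun j => Rabs (c j) * (A - rsum (fun i => Rabs (c i)) N)) M)).
  - apply rsum_le. intros j _.
    transitivity (Rabs (c j) * rsum (fun h => if Nat.leb N (j + h)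
                                              then Rabs (c (j + h)%nat) else 0) (S N)).
    + rewrite <- rsum_scal. right. apply rsum_ext. intros k _. destruct (Nat.leb N (j + k)); ring.
    + apply Rmult_le_compat_l; [apply Hc|]. exact (rsum_tail_window_le (fun i => Rabs (c i)) A N j (S N) Hc HA).
  - rewrite (rsum_ext _ (fun j => (A - rsum (fun i => Rabs (c i)) N) * Rabs (c j))) by (intros; ring).
    rewrite rsum_scal.
    pose proof (rsum_le_lim _ A M Hc HA). pose proof (rsum_le_lim _ A N Hc HA).
    pose proof (rsum_nonneg _ M (fun k _ => Hc k)).
    nra.
Qed.

Lemma cross_sum_err_le N M : (N <= M)%nat ->
  Rabs ((rsum (fun j => c j * c (j + 0)%nat) M - lag_sum c 0 N)
        + 2 * rsum (fun h => rsum (fun j => c j * c (j + S h)%nat) M - lag_sum c (S h) N) N)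
  <= 2 * (A * (A - rsum (fun i => Rabs (c i)) N)).
Proof.
  intros HM.
  set (W := fun h => rsum (fun j => if Nat.leb N (j + h)
                                   then Rabs (c j) * Rabs (c (j + h)%nat) else 0) M).
  assert (HW : forall h, (h <= N)%nat ->
            Rabs (rsum (fun j => c j * c (j + h)%nat) M - lag_sum c h N) <= W h).
  { intros h Hh. rewrite cross_sum_sub_lag_sum by lia.
    eapply Rle_trans; [apply Rabs_rsum_le|]. apply rsum_le. intros k _.
    destruct (Nat.leb N (k + h)); [rewrite Rabs_mult | rewrite Rabs_R0]; lra. }
  assert (HW0 : 0 <= W 0%nat).
  { apply rsum_nonneg. intros k _. destruct (Nat.leb N (k + 0));
      [apply Rmult_le_pos; apply Rabs_pos | lra]. }
  assert (Hsum : Rabs (rsum (fun h => rsum (fun j => c j * c (j + S h)%nat) M - lag_sum c (S h) N) N)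
                 <= rsum (fun h => W (S h)) N).
  { eapply Rle_trans; [apply Rabs_rsum_le|]. apply rsum_le. intros k Hk. apply HW. lia. }
  pose proof (cross_sum_tails_le N M) as Htails.
  change (rsum (fun h => W h) (S N) <= A * (A - rsum (fun i => Rabs (c i)) N)) in Htails.
  rewrite rsum_recl in Htails. pose proof (HW 0%nat ltac:(lia)).
  eapply Rle_trans; [apply Rabs_triang|]. rewrite Rabs_mult, (Rabs_right 2) by lra. lra.
Qed.

Lemma lrv_partial_sum_err N :
  Rabs (gam 0%nat / sigma2 + 2 * rsum (fun h => gam (S h) / sigma2) N - rsum c N ^ 2)
  <= 2 * (A * (A - rsum (fun i => Rabs (c i)) N)).
Proof.
  set (rho := fun h M => rsum (fun j => c j * c (j + h)%nat) M).
  apply (is_lim_seq_abs_ub (fun M => (rho 0%nat M - lag_sum c 0 N)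
           + 2 * rsum (fun h => rho (S h) M - lag_sum c (S h) N) N) _ N);
    [|exact (cross_sum_err_le N)].
  rewrite <- quad_form_const1, quad_form_lags.
  replace (gam 0%nat / sigma2 + 2 * rsum (fun h => gam (S h) / sigma2) N
           - (1 * lag_sum c 0 N + 2 * rsum (fun h => 1 * lag_sum c (S h) N) N))
    with ((gam 0%nat / sigma2 - lag_sum c 0 N)
          + 2 * rsum (fun h => gam (S h) / sigma2 - lag_sum c (S h) N) N)
    by (rewrite rsum_minus, (rsum_ext (fun h => 1 * lag_sum c (S h) N) (fun h => lag_sum c (S h) N))
          by (intros; ring); ring).
  apply is_lim_seq_plus'.
  - apply is_lim_seq_minus'; [apply is_lim_seq_cross_sum | apply is_lim_seq_const].
  - apply (is_lim_seq_scal_l _ 2 (Finite (rsum _ N))).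
    apply (is_lim_seq_rsum (fun h M => rho (S h) M - lag_sum c (S h) N)). intros h _.
    apply is_lim_seq_minus'; [apply is_lim_seq_cross_sum | apply is_lim_seq_const].
Qed.

Lemma is_lim_seq_long_run_variance c1 : infinite_sum c c1 ->
  is_lim_seq (fun N => gam 0%nat + 2 * rsum (fun h => gam (S h)) N) (sigma2 * c1 ^ 2).
Proof.
  intros Hc. apply is_lim_seq_infinite_sum in Hc.
  set (X := fun N => gam 0%nat / sigma2 + 2 * rsum (fun h => gam (S h) / sigma2) N).
  assert (HY : is_lim_seq (fun N => rsum c N ^ 2) (c1 ^ 2)).
  { apply (is_lim_seq_ext (fun N => rsum c N * rsum c N)); [intros; ring|].
    replace (c1 ^ 2) with (c1 * c1) by ring. now apply is_lim_seq_mult'. }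
  assert (Herr : is_lim_seq (fun N => X N - rsum c N ^ 2) 0).
  { apply (is_lim_seq_abs_le_0 _ _ lrv_partial_sum_err).
    replace (Finite 0) with (Finite (2 * (A * (A - A)))) by (f_equal; ring).
    apply (is_lim_seq_scal_l _ 2 (Finite (A * (A - A)))), (is_lim_seq_scal_l _ A (Finite (A - A))).
    apply is_lim_seq_minus'; [apply is_lim_seq_const | exact HA]. }
  pose proof (is_lim_seq_scal_l _ sigma2 _ (is_lim_seq_plus' _ _ _ _ HY Herr)) as H.
  rewrite Rplus_0_r in H. revert H. apply is_lim_seq_ext. intros N. unfold X.
  rewrite (rsum_ext (fun h => gam (S h) / sigma2) (fun h => / sigma2 * gam (S h))) by (intros; field; lra).
  rewrite rsum_scal. field. lra.
Qed.

Lemma rsum_abs_autocov_le H : rsum (fun h => Rabs (gam h)) H <= sigma2 * (A * A).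
Proof.
  assert (Hc : forall i, 0 <= Rabs (c i)) by (intros; apply Rabs_pos).
  assert (Hl : is_lim_seq (fun M => rsum (fun h => Rabs (sigma2 * rsum (fun j => c j * c (j + h)%nat) M)) H)
                          (rsum (fun h => Rabs (gam h)) H)).
  { apply (is_lim_seq_rsum (fun h M => Rabs (sigma2 * rsum (fun j => c j * c (j + h)%nat) M))).
    intros h _. pose proof (is_lim_seq_abs _ _ (is_lim_seq_scal_l _ sigma2 _ (is_lim_seq_cross_sum h))) as K.
    simpl in K. now replace (sigma2 * (gam h / sigma2)) with (gam h) in K by (field; lra). }
  apply (is_lim_seq_ub _ _ 0 _ Hl). intros M _.
  apply (Rle_trans _ (sigma2 * rsum (fun h => rsum (fun j => Rabs (c j) * Rabs (c (j + h)%nat)) M) H)).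
  { rewrite <- rsum_scal. apply rsum_le. intros h _. rewrite Rabs_mult, (Rabs_right sigma2) by lra.
    apply Rmult_le_compat_l; [lra|]. eapply Rle_trans; [apply Rabs_rsum_le|].
    apply rsum_le. intros; rewrite Rabs_mult; lra. }
  apply Rmult_le_compat_l; [lra|]. rewrite rsum_swap.
  apply (Rle_trans _ (rsum (fun j => A * Rabs (c j)) M)).
  - apply rsum_le. intros j _. rewrite rsum_scal, (Rmult_comm A). apply Rmult_le_compat_l; [apply Hc|].
    pose proof (rsum_split (fun i => Rabs (c i)) j H).
    pose proof (rsum_le_lim _ A (j + H) Hc HA). pose proof (rsum_nonneg _ j (fun k _ => Hc k)). lra.
  - rewrite rsum_scal. pose proof (rsum_le_lim _ A M Hc HA). pose proof (rsum_le_lim _ A 0 Hc HA).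
    simpl in *. nra.
Qed.

Lemma autocov_abs_summable : exists Ag : R, is_lim_seq (rsum (fun h => Rabs (gam h))) Ag.
Proof.
  destruct (ex_finite_lim_seq_incr (rsum (fun h => Rabs (gam h))) (sigma2 * (A * A))) as [Ag HAg].
  - intros n. simpl. pose proof (Rabs_pos (gam n)). lra.
  - exact rsum_abs_autocov_le.
  - now exists Ag.
Qed.

End LongRunVariance.

Theorem proposition1
  (d mu : R) (Hd : 0 < d < 1/2)
  (c : nat -> R) (sigma2 : R)
  (Hc0 : c 0%nat = 1)
  (Habs : exists l, infinite_sum (fun j => Rabs (c j)) l)
  (c1 : R) (Hc1 : infinite_sum c c1) (Hc1nz : c1 <> 0)
  (Hsigma : 0 < sigma2)
  (gam : nat -> R) (Hgam : is_autocov c sigma2 gam)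
  (G : R) (HG : is_Gamma (d + 1) G) :
  let omega2 := sigma2 * c1 ^ 2 in
  Un_cv (fun T => Rpower (INR T) (1 - 2 * d) * rv_var gam T (muhat d mu T))
        (omega2 * (1 - 2 * d) * (PI * d) ^ 2 / (G ^ 2 * (sin (PI * d)) ^ 2)).
Proof.
  intros omega2. apply is_lim_seq_Reals.
  destruct Habs as [A HA]. apply is_lim_seq_infinite_sum in HA.
  destruct (autocov_abs_summable c sigma2 gam A Hsigma Hgam HA) as [Ag HAg].
  pose proof (quad_form_ratio_lim (fun k => r_t d (S k)) gam Ag omega2
                (fun k => r_t_bounds d k ltac:(lra)) (r_t_decreasing d ltac:(lra))
                (is_lim_seq_r_sqsum_p_infty d G Hd HG) HAg
                (is_lim_seq_long_run_variance c sigma2 gam A Hsigma Hgam HA c1 Hc1)) as HQ.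
  pose proof (sinc_Gamma_pos d G ltac:(lra) HG) as HEG.
  pose proof (is_lim_seq_div' _ _ _ _ HQ (is_lim_seq_r_sqsum d G Hd HG)
                ltac:(apply Rgt_not_eq, Rdiv_lt_0_compat; [apply pow_lt|]; lra)) as H.
  replace (omega2 * (1 - 2 * d) * (PI * d) ^ 2 / (G ^ 2 * sin (PI * d) ^ 2))
    with (omega2 / ((sin (PI * d) / (PI * d) * G) ^ 2 / (1 - 2 * d))).
  2:{ pose proof PI_RGT_0. pose proof (is_Gamma_pos d G ltac:(lra) HG).
      assert (0 < sin (PI * d)) by (apply sin_gt_0; nra). field. repeat split; nra. }
  apply is_lim_seq_incr_1. apply is_lim_seq_incr_1 in H. revert H. apply is_lim_seq_ext.
  intros n. rewrite rv_var_muhat. fold (r_sqsum d (S n)).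
  pose proof (r_sqsum_pos d n ltac:(lra)). pose proof (Rpower_pos (INR (S n)) (1 - 2 * d)).
  field. lra.
Qed.
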